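(* Let $C>0$. There is a constant $C_1>0$ depending only on $C$ such that for any two mostly horizontal inclined to the right lines $l$ and $k$ with different slopes $a$ and $b$, $$N\bigl(s(l,C)\cap s(k,C)\bigr)\leqslant\frac{C_1}{|a-b|}.$$
   Context: For a line $l\subset\mathbb{R}^2$ and $C>0$, the $C$-strip is $s(l,C)=\{r\in\mathbb{R}^2\mid\rho(r,l)\leqslant C/2\}$, $\rho$ the Euclidean distance. A line is mostly horizontal inclined to the right if it has equation $y=ax+b$ with slope $0\leqslant a\leqslant1$. For $D\subseteq\mathbb{R}^2$, the integer cardinality is $N(D)=|\mathbb{Z}^2\cap D|$. *)

From Stdlib Require Import Reals List ZArith.
From Coquelicot Require Import Coquelicot.
Open Scope R_scope.

Definition eucl (p q : R * R) : R :=
  sqrt ((fst p - fst q) ^ 2 + (snd p - snd q) ^ 2).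

Definition line (a c : R) (q : R * R) : Prop := snd q = a * fst q + c.

Definition dist_line (a c : R) (r : R * R) : R :=
  real (Glb_Rbar (fun d => exists q, line a c q /\ d = eucl r q)).

Definition strip (a c C : R) (r : R * R) : Prop := dist_line a c r <= C / 2.

Definition ZZ (z : Z * Z) : R * R := (IZR (fst z), IZR (snd z)).

(* "N(D) <= M": every finite family of distinct integer points of D has at
   most M elements (i.e. |Z^2 ∩ D| <= M, in particular it is finite). *)
Definition N_le (D : R * R -> Prop) (M : R) : Prop :=
  forall L : list (Z * Z), NoDup L -> (forall z, In z L -> D (ZZ z)) ->
    INR (length L) <= M.

(* A lattice point (x, y) in the C-strip of y = a x + c satisfies
   |y - a x - c| <= sqrt (1 + a^2) * C / 2 <= C.  In the intersection of the
   strips of y = a x + c and y = b x + d this forces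
   |(a - b) x + c - d| <= 2 C, so x ranges over an interval of length
   4 C / |a - b|, and for each such x the ordinate y ranges over an interval
   of length 2 C.  Counting integers in these intervals gives at most
   (4 C / |a - b| + 2) (2 C + 2) <= (4 C + 2) (2 C + 2) / |a - b| points,
   because |a - b| <= 1. *)
From Stdlib Require Import Reals List ZArith Lra Lia Psatz.
From Coquelicot Require Import Coquelicot.
Open Scope R_scope.

Lemma le_real_Glb_Rbar (E : R -> Prop) (s e : R) :
  E e -> (forall x, E x -> s <= x) -> s <= real (Glb_Rbar E).
Proof.
  intros He Hlb.
  destruct (Glb_Rbar_correct E) as [Hlow Hgreatest].
  assert (Hs : Rbar_le s (Glb_Rbar E)) by (apply Hgreatest; exact Hlb).
  assert (He' : Rbar_le (Glb_Rbar E) e) by (apply Hlow; exact He).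
  destruct (Glb_Rbar E); simpl in *; easy.
Qed.

Lemma line_residual_le_eucl (a c x y : R) (q : R * R) :
  line a c q -> Rabs (y - a * x - c) <= sqrt (1 + a ^ 2) * eucl (x, y) q.
Proof.
  destruct q as [q1 q2]; unfold line, eucl; cbn [fst snd]; intros ->.
  rewrite <- sqrt_mult
    by (apply Rplus_le_le_0_compat; try apply Rle_0_1; apply pow2_ge_0).
  rewrite <- sqrt_Rsqr_abs; apply sqrt_le_1_alt; unfold Rsqr.
  (* Lagrange's identity: the difference of both sides is a square. *)
  assert (Hsq : 0 <= (x - q1 + a * (y - (a * q1 + c))) ^ 2) by apply pow2_ge_0.
  nra.
Qed.

Lemma line_residual_le_dist_line (a c x y : R) :
  Rabs (y - a * x - c) <= sqrt (1 + a ^ 2) * dist_line a c (x, y).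
Proof.
  assert (Hk : 0 < sqrt (1 + a ^ 2)) by (apply sqrt_lt_R0; nra).
  rewrite (Rmult_comm (sqrt _)); apply Rle_div_l; [exact Hk |].
  unfold dist_line; apply le_real_Glb_Rbar with (e := eucl (x, y) (x, a * x + c)).
  - exists (x, a * x + c); split; reflexivity.
  - intros e [q [Hq ->]].
    apply Rle_div_l; [exact Hk |].
    rewrite (Rmult_comm (eucl _ _)); apply line_residual_le_eucl, Hq.
Qed.

Lemma strip_residual_le (a c C x y : R) :
  a ^ 2 <= 3 -> strip a c C (x, y) -> Rabs (y - a * x - c) <= C.
Proof.
  unfold strip; intros Ha Hstrip.
  pose proof (line_residual_le_dist_line a c x y) as Hres.
  pose proof (Rabs_pos (y - a * x - c)) as Hpos.
  assert (Hk : 0 < sqrt (1 + a ^ 2)) by (apply sqrt_lt_R0; nra).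
  assert (Hk2 : sqrt (1 + a ^ 2) <= 2).
  { rewrite <- (sqrt_square 2) by lra; apply sqrt_le_1_alt; lra. }
  assert (Hd : 0 <= dist_line a c (x, y)).
  { apply Rmult_le_reg_l with (sqrt (1 + a ^ 2)); lra. }
  nra.
Qed.

Lemma strips_inter_abscissa (a c b d C x y : R) :
  a ^ 2 <= 3 -> b ^ 2 <= 3 -> a <> b ->
  strip a c C (x, y) -> strip b d C (x, y) ->
  Rabs (x - (d - c) / (a - b)) <= 2 * C / Rabs (a - b).
Proof.
  intros Ha Hb Hab Hl Hk.
  apply strip_residual_le in Hl; [| exact Ha].
  apply strip_residual_le in Hk; [| exact Hb].
  assert (Hne : a - b <> 0) by lra.
  replace (x - (d - c) / (a - b)) with (((a - b) * x - (d - c)) / (a - b))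
    by (field; exact Hne).
  rewrite Rabs_div by exact Hne.
  apply Rmult_le_compat_r; [left; apply Rinv_0_lt_compat, Rabs_pos_lt, Hne |].
  replace ((a - b) * x - (d - c))
    with ((y - b * x - d) + - (y - a * x - c)) by ring.
  eapply Rle_trans; [apply Rabs_triang |].
  rewrite Rabs_Ropp; lra.
Qed.

(* [up u - 1 <= u < up u], so the integers of [u, u + w] run from
   [up u - 1] (or one more) to [up (u + w) - 1]. *)
Definition Z_range (u w : R) : list Z :=
  map (fun i => (up u - 1 + Z.of_nat i)%Z)
    (seq 0 (Z.to_nat (up (u + w) - up u + 1))).

Lemma In_Z_range (u w : R) (z : Z) :
  u <= IZR z <= u + w -> In z (Z_range u w).
Proof.
  intros [Hlo Hhi].
  destruct (archimed u) as [Hu1 Hu2].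
  destruct (archimed (u + w)) as [Huw1 Huw2].
  assert (Hz1 : (up u - 1 <= z)%Z).
  { apply le_IZR; rewrite minus_IZR; simpl; lra. }
  assert (Hz2 : (z < up (u + w))%Z) by (apply lt_IZR; lra).
  apply in_map_iff; exists (Z.to_nat (z - (up u - 1))); split.
  - lia.
  - apply in_seq; lia.
Qed.

Lemma length_Z_range (u w : R) :
  0 <= w -> INR (length (Z_range u w)) <= w + 2.
Proof.
  intros Hw.
  destruct (archimed u) as [Hu1 Hu2].
  destruct (archimed (u + w)) as [Huw1 Huw2].
  assert (Hlt : (up u - 1 < up (u + w))%Z).
  { apply lt_IZR; rewrite minus_IZR; simpl; lra. }
  unfold Z_range; rewrite length_map, length_seq, INR_IZR_INZ, Z2Nat.id by lia.
  rewrite plus_IZR, minus_IZR; simpl; lra.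
Qed.

Lemma length_flat_map_le {A B : Type} (f : A -> list B) (l : list A) (m : R) :
  (forall x, In x l -> INR (length (f x)) <= m) ->
  INR (length (flat_map f l)) <= INR (length l) * m.
Proof.
  induction l as [| x l IH]; intros Hf; cbn [flat_map length].
  - simpl; lra.
  - rewrite length_app, plus_INR, S_INR.
    pose proof (Hf x (or_introl eq_refl)).
    pose proof (IH (fun y Hy => Hf y (or_intror Hy))).
    lra.
Qed.

Lemma N_le_sheared_box (D : R * R -> Prop) (f : R -> R) (u w h : R) :
  0 <= w -> 0 <= h ->
  (forall x y, D (x, y) -> u <= x <= u + w /\ f x <= y <= f x + h) ->
  N_le D ((w + 2) * (h + 2)).
Proof.
  intros Hw Hh HD L HL HLD.
  set (column := fun x : Z => map (pair x) (Z_range (f (IZR x)) h)).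
  assert (Hincl : incl L (flat_map column (Z_range u w))).
  { intros [x y] Hxy.
    destruct (HD _ _ (HLD _ Hxy)) as [Hx Hy].
    apply in_flat_map; exists x; split.
    - apply In_Z_range, Hx.
    - apply in_map, In_Z_range, Hy. }
  eapply Rle_trans; [apply le_INR, (NoDup_incl_length HL Hincl) |].
  eapply Rle_trans.
  - apply length_flat_map_le with (m := h + 2).
    intros x _; unfold column; rewrite length_map; apply length_Z_range, Hh.
  - apply Rmult_le_compat_r; [lra | apply length_Z_range, Hw].
Qed.

Theorem lemma2 :
  forall C : R, 0 < C ->
  exists C1 : R, 0 < C1 /\
    forall a c b d : R,
      0 <= a <= 1 -> 0 <= b <= 1 -> a <> b ->
      N_le (fun r => strip a c C r /\ strip b d C r) (C1 / Rabs (a - b)).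
Proof.
  intros C HC; exists ((4 * C + 2) * (2 * C + 2)); split; [nra |].
  intros a c b d Ha Hb Hab.
  set (delta := Rabs (a - b)).
  assert (Hdelta : 0 < delta) by (apply Rabs_pos_lt; lra).
  assert (Hdelta1 : delta <= 1) by (apply Rabs_le_between; lra).
  set (K := 2 * C / delta).
  assert (HK : 0 <= K) by (apply Rmult_le_pos; [lra | left; apply Rinv_0_lt_compat, Hdelta]).
  assert (Hbox : N_le (fun r => strip a c C r /\ strip b d C r)
                      ((2 * K + 2) * (2 * C + 2))).
  { apply (N_le_sheared_box _ (fun x => a * x + c - C) ((d - c) / (a - b) - K));
      [lra | lra |].
    intros x y [Hl Hk].
    assert (Hx : Rabs (x - (d - c) / (a - b)) <= K)
      by (apply (strips_inter_abscissa a c b d C x y); auto; nra).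
    apply strip_residual_le in Hl; [| nra].
    apply Rabs_le_between in Hl, Hx.
    split; lra. }
  assert (HKdelta : 2 * K + 2 <= (4 * C + 2) / delta).
  { replace (2 * K + 2) with ((4 * C + 2 * delta) / delta) by (unfold K; field; lra).
    apply Rmult_le_compat_r; [left; apply Rinv_0_lt_compat, Hdelta | lra]. }
  intros L HL HLD.
  eapply Rle_trans; [apply Hbox; assumption |].
  replace ((4 * C + 2) * (2 * C + 2) / delta) with ((4 * C + 2) / delta * (2 * C + 2))
    by (field; lra).
  apply Rmult_le_compat_r; lra.
Qed.
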